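(* Let $\varphi$ be the rational map of the Riemann sphere $\hat{\mathbb{C}}$ given by $$\varphi(z)=\frac{z(2+z)(1+z-z^2)}{(1+2z)(1-z-z^2)},$$ and let $\omega=e^{2\pi i/3}$. Then $\omega$ and $\omega^2$ are attracting fixed points of $\varphi$; for every $z\in\mathbb{C}$ with $\operatorname{Im}z>0$ one has $\varphi^{\circ n}(z)\to\omega$, and for every $z\in\mathbb{C}$ with $\operatorname{Im}z<0$ one has $\varphi^{\circ n}(z)\to\omega^2$ as $n\to\infty$. The extended real line $\mathbb{R}\cup\{\infty\}$ is forward and backward invariant under $\varphi$. *)

(* C = R[i] (complex numbers over a
   real type R, from mathcomp-real-closed), viewed through its regular
   normed structure (R[i])^o so that MathComp-Analysis limits/derivatives
   apply. *)
From HB Require Import structures.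
From mathcomp Require Import all_boot all_order all_algebra.
From mathcomp Require Import complex.
From mathcomp Require Import all_classical all_reals all_analysis.
Import Order.TTheory GRing.Theory Num.Theory.
Import numFieldTopology.Exports numFieldNormedType.Exports.

Set Implicit Arguments.
Unset Strict Implicit.
Unset Printing Implicit Defensive.

Local Open Scope ring_scope.
Local Open Scope classical_set_scope.

Notation Cplx R := ((complex R)^o).

(* the Riemann sphere: None is the point at infinity *)
Notation sphere R := (option (Cplx R)).

Definition phiP (R : realType) (z : Cplx R) : Cplx R :=
  z * (2 + z) * (1 + z - z ^+ 2).
Definition phiQ (R : realType) (z : Cplx R) : Cplx R :=
  (1 + 2 * z) * (1 - z - z ^+ 2).

Definition phiC (R : realType) (z : Cplx R) : Cplx R := phiP z / phiQ z.

(* phi as a map of the Riemann sphere: poles go to infinity, and since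
   deg P = 4 > 3 = deg Q, infinity goes to infinity.  (P and Q have no
   common root, so this is the standard extension.) *)
Definition phi (R : realType) (p : sphere R) : sphere R :=
  match p with
  | None => None
  | Some z => if phiQ z == 0 then None else Some (phiC z)
  end.

Definition omega (R : realType) : Cplx R :=
  Complex (cos (2 * pi / 3 : R)) (sin (2 * pi / 3 : R)).

Definition attracting_fixed (R : realType) (f : sphere R -> sphere R)
  (fC : Cplx R -> Cplx R) (w : Cplx R) : Prop :=
  f (Some w) = Some w /\ derivable fC w 1 /\ `| fC^`() w | < 1.

Definition sphere_cvg_fin (R : realType) (s : nat -> sphere R) (w : Cplx R)
  : Prop :=
  exists u : nat -> Cplx R,
    (\forall n \near \oo, s n = Some (u n)) /\ u n @[n --> \oo] --> w.

Definition ext_real_line (R : realType) : set (sphere R) :=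
  fun p => match p with None => True | Some z => complex.Im z = 0 end.

From HB Require Import structures.
From mathcomp Require Import all_boot all_order all_algebra.
From mathcomp Require Import complex.
From mathcomp Require Import all_classical all_reals all_analysis.
From mathcomp Require Import ring lra.
Set Implicit Arguments.
Unset Strict Implicit.
Unset Printing Implicit Defensive.

Import Order.TTheory GRing.Theory Num.Theory.
Import numFieldTopology.Exports numFieldNormedType.Exports.
Local Open Scope ring_scope.
Local Open Scope classical_set_scope.

(* Let w be a root of w^2 + w + 1 (i.e. w = omega or omega^2) and w' = -1 - w
   the other one.  The polynomial identity
       3 (P(z) - w Q(z)) = -(z - w) (2 (z - w)^3 + (z - w')^3)       (phi_key)
   and its twin with w, w' exchanged show that in the Blaschke coordinate
   r = (z - w) / (z - w') the map phi reads r |-> r (2 r^3 + 1) / (r^3 + 2).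
   Hence, on the side |r| < 1 of w, which is the open half plane where Im z
   has the sign of Im w (root_sideP), phi is finite, preserves the side and
   multiplies |r|^2 by at most contraction (|r|^2) < 1 (phi_step); iterating,
   |r|^2 decays geometrically and the orbit converges to w (orbit_cvg).
   The same identity gives phi(w) = w, and the quotient rule gives phi'(w) = 1/2
   (attracting_root).  Finally phi is real on the real axis, it is onto R u {oo}
   by the intermediate value theorem between the poles -1/2 and (sqrt 5 - 1)/2
   (phiR_onto), and it preserves both half planes (phi_nonreal), which gives
   the forward and backward invariance of the extended real line.
   All estimates are polynomial inequalities in the squared modulus sqmod. *)

Section SquaredModulus.
Variable R : realType.
Local Notation C := (Cplx R).

Lemma ReD (x y : C) : complex.Re (x + y) = complex.Re x + complex.Re y.
Proof. by case: x => a b; case: y. Qed.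
Lemma ImD (x y : C) : complex.Im (x + y) = complex.Im x + complex.Im y.
Proof. by case: x => a b; case: y. Qed.
Lemma ReN (x : C) : complex.Re (- x) = - complex.Re x.
Proof. by case: x. Qed.
Lemma ImN (x : C) : complex.Im (- x) = - complex.Im x.
Proof. by case: x. Qed.
Lemma ReM (x y : C) :
  complex.Re (x * y) = complex.Re x * complex.Re y - complex.Im x * complex.Im y.
Proof. by case: x => a b; case: y. Qed.
Lemma ImM (x y : C) :
  complex.Im (x * y) = complex.Re x * complex.Im y + complex.Im x * complex.Re y.
Proof. by case: x => a b; case: y. Qed.
Lemma ReMn (x : C) n : complex.Re (x *+ n) = complex.Re x *+ n.
Proof. by elim: n => [|n IH]; rewrite ?mulr0n // !mulrS ReD IH. Qed.
Lemma ImMn (x : C) n : complex.Im (x *+ n) = complex.Im x *+ n.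
Proof. by elim: n => [|n IH]; rewrite ?mulr0n // !mulrS ImD IH. Qed.

Lemma complex_ext (x y : C) :
  complex.Re x = complex.Re y -> complex.Im x = complex.Im y -> x = y.
Proof. by case: x => a b; case: y => c d /= -> ->. Qed.

Definition sqmod (z : C) : R := complex.Re z ^+ 2 + complex.Im z ^+ 2.

Lemma sqmod_ge0 z : 0 <= sqmod z.
Proof. rewrite /sqmod; nra. Qed.

Lemma sqmod_eq0 z : sqmod z = 0 -> z = 0.
Proof.
case: z => a b; rewrite /sqmod /= => h.
have ha : a = 0 by nra.
have hb : b = 0 by nra.
by rewrite ha hb.
Qed.

Lemma sqmod_gt0 z : z != 0 -> 0 < sqmod z.
Proof.
by move=> z0; rewrite lt_def sqmod_ge0 andbT; apply: contra z0 => /eqP/sqmod_eq0->.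
Qed.

Lemma sqmod1 : sqmod 1 = 1.
Proof. by rewrite /sqmod /=; ring. Qed.

Lemma sqmodN z : sqmod (- z) = sqmod z.
Proof. by rewrite /sqmod ReN ImN; ring. Qed.

Lemma sqmodM x y : sqmod (x * y) = sqmod x * sqmod y.
Proof. by rewrite /sqmod ReM ImM; ring. Qed.

Lemma sqmodX x n : sqmod (x ^+ n) = sqmod x ^+ n.
Proof. by elim: n => [|n IH]; rewrite ?expr0 ?sqmod1 // !exprS sqmodM IH. Qed.

Lemma sqmodV x : sqmod x^-1 = (sqmod x)^-1.
Proof.
have [->|x0] := eqVneq x 0; first by rewrite invr0 /sqmod /= expr0n /= addr0 invr0.
have sx0 : sqmod x != 0 by rewrite gt_eqF // sqmod_gt0.
by apply: (mulfI sx0); rewrite -sqmodM !mulfV // sqmod1.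
Qed.

Lemma sqmod_natM (x : C) n : sqmod (n%:R * x) = n%:R ^+ 2 * sqmod x.
Proof.
rewrite mulr_natl /sqmod ReMn ImMn.
by rewrite -(mulr_natl (complex.Re x)) -(mulr_natl (complex.Im x)); ring.
Qed.

Lemma sqmodD_le x y : sqmod (x + y) <= 2 * sqmod x + 2 * sqmod y.
Proof.
rewrite /sqmod ReD ImD.
have := sqr_ge0 (complex.Re x - complex.Re y).
have := sqr_ge0 (complex.Im x - complex.Im y); nra.
Qed.

(* |2x + y|^2 - |2y + x|^2 = 3 (|x|^2 - |y|^2): the source of the contraction. *)
Lemma sqmod_swap x y :
  sqmod (2 * x + y) - sqmod (2 * y + x) = 3 * (sqmod x - sqmod y).
Proof. by rewrite /sqmod !ReD !ImD !ReM !ImM /=; ring. Qed.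

End SquaredModulus.
Arguments sqmod {R} z.

Section Contraction.
Variable R : realType.
Local Notation C := (Cplx R).

(* The key identity: if w is a root of w^2 + w + 1 then, writing the other
   root as w' = -1 - w (so that z - w' = z + 1 + w),
     3 (P(z) - w Q(z)) = -(z - w) (2 (z - w)^3 + (z - w')^3). *)
Lemma phi_key (z : C) {w : C} : w ^+ 2 + w + 1 = 0 ->
  3 * (phiP z - w * phiQ z) =
  - ((z - w) * (2 * (z - w) ^+ 3 + (z + 1 + w) ^+ 3)).
Proof.
move=> hw; apply/eqP; rewrite -subr_eq0 opprK.
have -> : 3 * (phiP z - w * phiQ z) +
          (z - w) * (2 * (z - w) ^+ 3 + (z + 1 + w) ^+ 3) =
   (- (4) * w + w ^+ 2 + 7 * z - 10 * z * w + 12 * z ^+ 2) * (w ^+ 2 + w + 1).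
  by rewrite /phiP /phiQ; ring.
by rewrite hw mulr0.
Qed.

Lemma numerator_sqmod (z : C) {w : C} : w ^+ 2 + w + 1 = 0 ->
  9 * sqmod (phiP z - w * phiQ z) =
  sqmod (z - w) * sqmod (2 * (z - w) ^+ 3 + (z + 1 + w) ^+ 3).
Proof.
move=> hw; have := congr1 sqmod (phi_key z hw).
by rewrite sqmod_natM sqmodN sqmodM => <-; ring.
Qed.

(* The contraction factor of one step, as a function of the squared
   modulus r of the current Blaschke coordinate. *)
Definition contraction (r : R) : R := 1 - 3 / 10 * (1 - r ^+ 3).

(* The factor (2 r^3 + 1) / (r^3 + 2) of the Blaschke product, written
   homogeneously with r = a / b: it has modulus < 1 when |a| < |b|, with
   the quantitative bound |.|^2 <= contraction (|a/b|^2). *)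
Lemma blaschke_factor (a b : C) : sqmod a < sqmod b ->
  let X := 2 * a ^+ 3 + b ^+ 3 in let Y := 2 * b ^+ 3 + a ^+ 3 in
  sqmod X < sqmod Y /\ sqmod X / sqmod Y <= contraction (sqmod a / sqmod b).
Proof.
move=> hab X Y.
have a0 := sqmod_ge0 a; have X0 := sqmod_ge0 X.
have b0 : 0 < sqmod b by apply: le_lt_trans hab.
set u := sqmod a ^+ 3; set v := sqmod b ^+ 3.
have v0 : 0 < v by rewrite exprn_gt0.
have uv : u < v by rewrite ltrXn2r.
have XY : sqmod X - sqmod Y = 3 * (u - v) by rewrite sqmod_swap !sqmodX.
have Y10 : sqmod Y <= 10 * v.
  apply: le_trans (sqmodD_le _ _) _.
  by rewrite sqmod_natM !sqmodX -/u -/v; lra.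
have XltY : sqmod X < sqmod Y by rewrite -subr_lt0 XY; nra.
have Y0 : 0 < sqmod Y by apply: le_lt_trans XltY.
split => //.
rewrite /contraction expr_div_n -/u -/v ler_pdivrMr //.
set t := 1 - u / v.
have t0 : 0 <= t by rewrite subr_ge0 ler_pdivrMr // mul1r ltW.
have tv : t * v = v - u by rewrite /t; field; rewrite gt_eqF.
have : 0 <= t * (10 * v - sqmod Y) by rewrite mulr_ge0 // subr_ge0.
nra.
Qed.

(* The squared modulus of the Blaschke coordinate (z - w) / (z - w') of z,
   where w' = -1 - w. *)
Definition ratio (w z : C) : R := sqmod (z - w) / sqmod (z + 1 + w).

Lemma ratio_ge0 w z : 0 <= ratio w z.
Proof. by rewrite /ratio divr_ge0 ?sqmod_ge0. Qed.

Lemma ratio_lt1 w z : sqmod (z - w) < sqmod (z + 1 + w) -> ratio w z < 1.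
Proof.
move=> h; have h0 : 0 < sqmod (z + 1 + w) by apply: le_lt_trans h; apply: sqmod_ge0.
by rewrite /ratio ltr_pdivrMr // mul1r.
Qed.

Lemma phi_step (w z : C) : w ^+ 2 + w + 1 = 0 ->
  sqmod (z - w) < sqmod (z + 1 + w) ->
  [/\ phiQ z != 0, sqmod (phiC z - w) < sqmod (phiC z + 1 + w)
    & ratio w (phiC z) <= ratio w z * contraction (ratio w z)].
Proof.
move=> hw hab.
have hw' : (- 1 - w) ^+ 2 + (- 1 - w) + 1 = 0 by rewrite -hw; ring.
have NA := numerator_sqmod z hw; have NB := numerator_sqmod z hw'.
have e1 : z - (-1 - w) = z + 1 + w by ring.
have e2 : z + 1 + (-1 - w) = z - w by ring.
rewrite e1 e2 in NB.
move: NA NB; rewrite /ratio.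
set a := z - w; set b := z + 1 + w.
set A := phiP z - w * phiQ z; set B := phiP z - (-1 - w) * phiQ z => NA NB.
have [XY contr] := blaschke_factor hab.
move: XY contr; set X := 2 * a ^+ 3 + b ^+ 3; set Y := 2 * b ^+ 3 + a ^+ 3.
move=> XY contr.
have a0 := sqmod_ge0 a.
have b0 : 0 < sqmod b by apply: le_lt_trans hab.
have Y0 : 0 < sqmod Y by apply: le_lt_trans XY; apply: sqmod_ge0.
have AB : sqmod A < sqmod B.
  have : sqmod a * sqmod X < sqmod b * sqmod Y.
    by apply: le_lt_trans (_ : sqmod a * sqmod Y < _); [rewrite ler_wpM2l // ltW | rewrite ltr_pM2r].
  lra.
have hQ : phiQ z != 0.
  by apply: contraTneq AB => Q0; rewrite /A /B Q0 !mulr0 ltxx.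
have Q0 : 0 < sqmod (phiQ z) by apply: sqmod_gt0.
have B0 : 0 < sqmod B by apply: le_lt_trans AB; apply: sqmod_ge0.
have -> : phiC z - w = A / phiQ z by rewrite /phiC /A; field.
have -> : phiC z + 1 + w = B / phiQ z by rewrite /phiC /B; field.
rewrite !sqmodM !sqmodV; split => //; first by rewrite ltr_pM2r // invr_gt0.
have -> : sqmod A / sqmod (phiQ z) / (sqmod B / sqmod (phiQ z)) =
          sqmod a / sqmod b * (sqmod X / sqmod Y).
  have -> : sqmod A = sqmod a * sqmod X / 9 by rewrite -NA; field.
  have -> : sqmod B = sqmod b * sqmod Y / 9 by rewrite -NB; field.
  by field; rewrite !gt_eqF.
by rewrite ler_wpM2l // divr_ge0 // ltW.
Qed.

End Contraction.

Section CubeRoots.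
Variable R : realType.
Local Notation C := (Cplx R).

Lemma root_coords (w : C) : w ^+ 2 + w + 1 = 0 ->
  2 * complex.Re w + 1 = 0 /\ 4 * complex.Im w ^+ 2 = 3.
Proof.
case: w => a b h.
have := congr1 (@complex.Re R) h; have := congr1 (@complex.Im R) h.
rewrite !ReD !ImD expr2 ReM ImM /= => him hre.
have /eqP : b * (2 * a + 1) = 0 by lra.
rewrite mulf_eq0 => /orP [/eqP b0 | /eqP a2].
  by move: hre; rewrite b0; nra.
by split => //; nra.
Qed.

(* The perpendicular bisector of w and w' = -1 - w is the real axis. *)
Lemma root_side (w z : C) : w ^+ 2 + w + 1 = 0 ->
  sqmod (z - w) - sqmod (z + 1 + w) = - 4 * complex.Im w * complex.Im z.
Proof.
move=> /root_coords [rew _]; apply/eqP; rewrite -subr_eq0; apply/eqP.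
rewrite /sqmod !ReD !ImD !ReN !ImN /=.
transitivity (- (2 * complex.Re z + 1) * (2 * complex.Re w + 1)); first by ring.
by rewrite rew mulr0.
Qed.

Lemma root_sqmod (w : C) : w ^+ 2 + w + 1 = 0 -> sqmod (2 * w + 1) = 3.
Proof.
move=> /root_coords [rew imw].
rewrite /sqmod ReD ImD ReM ImM /=.
transitivity ((2 * complex.Re w + 1) ^+ 2 + 4 * complex.Im w ^+ 2); first by ring.
by rewrite rew imw; ring.
Qed.

Lemma root_sideP (w z : C) : w ^+ 2 + w + 1 = 0 ->
  (sqmod (z - w) < sqmod (z + 1 + w)) = (0 < complex.Im w * complex.Im z).
Proof. by move=> hw; rewrite -subr_lt0 root_side // -mulrA; nra. Qed.

Lemma cis_add (a b : R) :
  (Complex (cos a) (sin a) : C) * Complex (cos b) (sin b) =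
  Complex (cos (a + b)) (sin (a + b)).
Proof. by apply: complex_ext; rewrite ?ReM ?ImM /= ?cosD ?sinD; ring. Qed.

Lemma omega_cube : (omega R : C) ^+ 3 = 1.
Proof.
rewrite /omega !exprS expr0 mulr1 !cis_add.
have -> : 2 * pi / 3 + (2 * pi / 3 + 2 * pi / 3) = pi *+ 2 :> R.
  by rewrite -mulr_natr; field.
by rewrite cos2pi sin2pi.
Qed.

Lemma omega_Im_gt0 : 0 < complex.Im (omega R : C).
Proof.
rewrite /omega /=; apply: sin_gt0_pi.
by have pi0 := pi_gt0 R; apply/andP; split; lra.
Qed.

(* omega is a root of w^2 + w + 1 = (w^3 - 1) / (w - 1), and so is
   omega^2 = -1 - omega. *)
Lemma omega_root : (omega R : C) ^+ 2 + omega R + 1 = 0.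
Proof.
have : (omega R - 1) * ((omega R : C) ^+ 2 + omega R + 1) = 0.
  have -> : (omega R - 1) * ((omega R : C) ^+ 2 + omega R + 1) = omega R ^+ 3 - 1.
    by ring.
  by rewrite omega_cube subrr.
move/eqP; rewrite mulf_eq0 subr_eq0 => /orP [/eqP omega1 | /eqP //].
by have := omega_Im_gt0; rewrite omega1 ltxx.
Qed.

Lemma omega2E : (omega R : C) ^+ 2 = - 1 - omega R.
Proof. by apply/eqP; rewrite -subr_eq0 -omega_root; apply/eqP; ring. Qed.

Lemma omega2_root : (omega R : C) ^+ 2 ^+ 2 + omega R ^+ 2 + 1 = 0.
Proof. by rewrite omega2E -omega_root; ring. Qed.

Lemma omega2_Im_lt0 : complex.Im ((omega R : C) ^+ 2) < 0.
Proof. by have := omega_Im_gt0; rewrite omega2E !ImD !ImN /=; lra. Qed.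

End CubeRoots.

Section Convergence.
Variable R : realType.
Local Notation C := (Cplx R).

Lemma contraction_ge0 (r : R) : 0 <= r -> 0 <= contraction r.
Proof. by move=> r0; rewrite /contraction; have := exprn_ge0 3 r0; lra. Qed.

Lemma contraction_lt1 (r : R) : 0 <= r -> r < 1 -> contraction r < 1.
Proof.
move=> r0 r1; have : r ^+ 3 < 1 by rewrite expr_lt1.
by rewrite /contraction; lra.
Qed.

Lemma contraction_le (r s : R) : 0 <= r -> r <= s -> contraction r <= contraction s.
Proof.
move=> r0 rs; have s0 := le_trans r0 rs.
have : r ^+ 3 <= s ^+ 3 by apply: lerXn2r; rewrite ?nnegrE.
by rewrite /contraction; lra.
Qed.

Lemma sqmod_le_ratio (w z : C) : w ^+ 2 + w + 1 = 0 ->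
  sqmod (z - w) < sqmod (z + 1 + w) ->
  ratio w z <= 1 / 4 -> sqmod (z - w) <= 12 * ratio w z.
Proof.
move=> hw side hr.
have r0 := ratio_ge0 w z; have s0 := sqmod_ge0 (z - w).
have hb : sqmod (z + 1 + w) <= 2 * sqmod (z - w) + 6.
  have := sqmodD_le (z - w) (2 * w + 1).
  by rewrite root_sqmod // (_ : z - w + (2 * w + 1) = z + 1 + w); [lra | ring].
have b0 : sqmod (z + 1 + w) != 0 by rewrite gt_eqF // (le_lt_trans s0).
have hs : sqmod (z - w) = ratio w z * sqmod (z + 1 + w) by rewrite /ratio; field.
by rewrite hs in hb *; nra.
Qed.

Lemma orbit_contraction (w z0 : C) : w ^+ 2 + w + 1 = 0 ->
  sqmod (z0 - w) < sqmod (z0 + 1 + w) -> forall n,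
  [/\ iter n (@phi R) (Some z0) = Some (iter n (@phiC R) z0),
      sqmod (iter n (@phiC R) z0 - w) < sqmod (iter n (@phiC R) z0 + 1 + w)
    & ratio w (iter n (@phiC R) z0) <=
      contraction (ratio w z0) ^+ n * ratio w z0].
Proof.
move=> hw side0; set q := contraction (ratio w z0).
have r0 := ratio_ge0 w z0; have q0 : 0 <= q by exact: contraction_ge0.
elim=> [|n [orbit_n side_n decay_n]]; first by rewrite expr0 mul1r.
have [Q0 side_n1 step_n] := phi_step hw side_n.
rewrite /= orbit_n /= (negbTE Q0); split => //.
set zn := iter n (@phiC R) z0 in side_n decay_n step_n *.
have rn0 := ratio_ge0 w zn.
have rn : ratio w zn <= ratio w z0.
  apply: le_trans decay_n _; rewrite -[leRHS]mul1r ler_wpM2r //.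
  exact/exprn_ile1/ltW/contraction_lt1/ratio_lt1.
apply: le_trans step_n _.
rewrite exprS -mulrA mulrC ler_pM //.
  exact: contraction_ge0.
exact: contraction_le.
Qed.

Lemma cvg_sqmod (u : nat -> C) (w : C) :
  (forall e : R, 0 < e -> \forall n \near \oo, sqmod (u n - w) < e) ->
  u n @[n --> \oo] --> w.
Proof.
move=> small; apply/cvgrPdist_lt => e; rewrite ltcE /= => /andP [/eqP ime e0].
move: (small _ (exprn_gt0 2 e0)); apply: filterS => n hn.
rewrite normc_def ltcE /= ime eqxx /= -(ger0_norm (ltW e0)) -sqrtr_sqr.
by rewrite ltr_sqrt ?exprn_gt0 // -opprB -[_ + _]/(sqmod (- (u n - w))) sqmodN.
Qed.

Lemma orbit_cvg (w z0 : C) : w ^+ 2 + w + 1 = 0 ->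
  sqmod (z0 - w) < sqmod (z0 + 1 + w) ->
  sphere_cvg_fin (fun n => iter n (@phi R) (Some z0)) w.
Proof.
move=> hw side0; have orbit := orbit_contraction hw side0.
exists (fun n => iter n (@phiC R) z0); split.
  by apply: nearW => n; case: (orbit n).
set q := contraction (ratio w z0).
have r0 := ratio_ge0 w z0; have r1 := ratio_lt1 side0.
have q_to0 : q ^+ n @[n --> \oo] --> (0 : R).
  by apply: cvg_expr; rewrite ger0_norm ?contraction_lt1 ?contraction_ge0.
apply: cvg_sqmod => e e0.
have e' : 0 < Num.min (1 / 4) (e / 12) by rewrite lt_min !divr_gt0.
move/cvgr0Pnorm_lt: q_to0 => /(_ _ e'); apply: filterS => n.
rewrite ger0_norm ?exprn_ge0 ?contraction_ge0 // lt_min => /andP [q14 qe].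
have [_ side_n decay] := orbit n.
have qr : q ^+ n * ratio w z0 <= q ^+ n.
  by rewrite ler_piMr ?exprn_ge0 ?contraction_ge0 // ltW.
have := sqmod_le_ratio hw side_n.
have := le_trans decay qr; lra.
Qed.

End Convergence.

Section FixedPoints.
Variable R : realType.
Local Notation C := (Cplx R).

(* Q does not vanish at w, since Q(w) = 2 (2w + 1) and |2w + 1|^2 = 3. *)
Lemma phiQ_root (w : C) : w ^+ 2 + w + 1 = 0 -> phiQ w != 0.
Proof.
move=> hw; have -> : phiQ w = (2 * w + 1) * (2 - (w ^+ 2 + w + 1)).
  by rewrite /phiQ; ring.
have w2 : 2 * w + 1 != 0.
  by apply/eqP => w0; have := root_sqmod hw; rewrite w0 /sqmod /= expr0n /=; lra.
by rewrite hw subr0 mulf_neq0 // pnatr_eq0.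
Qed.

Lemma phiC_root (w : C) : w ^+ 2 + w + 1 = 0 -> phiC w = w.
Proof.
move=> hw; have := phi_key w hw; rewrite subrr mul0r oppr0 => /eqP.
rewrite mulf_eq0 pnatr_eq0 /= subr_eq0 => /eqP PwQ.
by rewrite /phiC PwQ mulfK // phiQ_root.
Qed.

(* The derivative of phi = P/Q by the quotient rule. *)
Definition phiC' (z : C) : C :=
  ((2 + 6 * z - 3 * z ^+ 2 - 4 * z ^+ 3) * phiQ z
   - phiP z * (1 - 6 * z - 6 * z ^+ 2)) / phiQ z ^+ 2.

Local Notation K := (Num.NumField.sort (complex R)).

Lemma phiC_is_derive (w : C) : phiQ w != 0 ->
  is_derive w (1 : C) (fun z : C => phiC z : K) (phiC' w).
Proof.
move=> Qw.
pose f : C -> K := id.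
have hf : is_derive w (1 : C) f 1 by exact: is_derive_id.
have hc (a : K) : is_derive w (1 : C) (cst a : C -> K) 0 by exact: is_derive_cst.
have hP := is_deriveM (is_deriveM hf (is_deriveD (hc 2) hf))
  (is_deriveB (is_deriveD (hc 1) hf) (is_deriveX 2 hf)).
have hQ := is_deriveM (is_deriveD (hc 1) (is_deriveM (hc 2) hf))
  (is_deriveB (is_deriveB (hc 1) hf) (is_deriveX 2 hf)).
set Qf := (_ * _ : C -> K) in hQ.
have Qfw : Qf w != 0 by [].
have hV : is_derive w (1 : C) (fun y => (Qf y)^-1) (- Qf w ^- 2 *: 'D_1 Qf w).
  by apply: DeriveDef; [exact: derivableV | exact: deriveV].
have := is_deriveM hP hV; rewrite (@derive_val _ _ _ _ _ _ _ hQ).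
have -> : (f * (cst 2 + f) * (cst 1 + f - f ^+ 2)) * (fun y => (Qf y)^-1) =
          (fun z : C => phiC z : K) by apply: funext.
congr is_derive; rewrite /Qf /f /phiC' /= !fctE /GRing.scale /=.
move: Qw; rewrite /phiP /phiQ mulf_eq0 negb_or => /andP [Q1 Q2].
by field; rewrite Q1 Q2.
Qed.

Lemma phiC'_root (w : C) : w ^+ 2 + w + 1 = 0 -> phiC' w = 2^-1.
Proof.
move=> hw; have Qw := phiQ_root hw.
have num : 2 * ((2 + 6 * w - 3 * w ^+ 2 - 4 * w ^+ 3) * phiQ w
                - phiP w * (1 - 6 * w - 6 * w ^+ 2)) - phiQ w ^+ 2
         = (3 + 7 * w + 7 * w ^+ 2) * (w ^+ 2 + w + 1).
  by rewrite /phiP /phiQ; ring.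
rewrite hw mulr0 in num; rewrite /phiC'.
apply: (mulfI (_ : (2 : K) != 0)); first by rewrite pnatr_eq0.
by rewrite mulrA (subr0_eq num) !mulfV ?expf_neq0 ?pnatr_eq0.
Qed.

Lemma attracting_root (w : C) : w ^+ 2 + w + 1 = 0 ->
  attracting_fixed (@phi R) (@phiC R) w.
Proof.
move=> hw; have Qw := phiQ_root hw; have hd := phiC_is_derive Qw.
split; first by rewrite /phi (negbTE Qw) phiC_root.
split; first by case: hd.
rewrite derive1E (@derive_val _ _ _ _ _ _ _ hd) phiC'_root //.
by rewrite ger0_norm ?invr_ge0 ?ler0n // invf_lt1 ?ltr0n // ltr1n.
Qed.

End FixedPoints.

Section RealLine.
Variable R : realType.
Local Notation C := (Cplx R).

Definition phiPr (x : R) : R := x * (2 + x) * (1 + x - x ^+ 2).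
Definition phiQr (x : R) : R := (1 + 2 * x) * (1 - x - x ^+ 2).

Lemma phiP_real (x : R) : phiP (Complex x 0 : C) = Complex (phiPr x) 0.
Proof. by apply: complex_ext; rewrite /phiP /phiPr /=; ring. Qed.

Lemma phiQ_real (x : R) : phiQ (Complex x 0 : C) = Complex (phiQr x) 0.
Proof. by apply: complex_ext; rewrite /phiQ /phiQr /=; ring. Qed.

Lemma phi_real (x : R) : phiQr x != 0 ->
  phi (Some (Complex x 0 : C)) = Some (Complex (phiPr x / phiQr x) 0).
Proof.
move=> Qx; have Qx' : phiQ (Complex x 0 : C) != 0.
  by rewrite phiQ_real; apply: contra Qx => /eqP [->].
rewrite /= (negbTE Qx') /phiC phiP_real phiQ_real; congr Some.
by apply: complex_ext => /=; [field | ring].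
Qed.

Lemma phiC_real (x : R) : complex.Im (phiC (Complex x 0 : C)) = 0.
Proof. by rewrite /phiC phiP_real phiQ_real /=; ring. Qed.

(* P and Q have no common real root: at the roots of 1 - x - x^2 the value
   of P is 2, and P(-1/2) = -3/16. *)
Lemma phiPr_Qroot (x : R) : 1 - x - x ^+ 2 = 0 -> phiPr x = 2.
Proof.
move=> hx; have -> : phiPr x = 2 + (x ^+ 2 - 2) * (1 - x - x ^+ 2).
  by rewrite /phiPr; ring.
by rewrite hx mulr0 addr0.
Qed.

Lemma phiPr_pole (x : R) : phiQr x = 0 -> phiPr x != 0.
Proof.
move/eqP; rewrite mulf_eq0 => /orP [/eqP x2 | /eqP /phiPr_Qroot -> //].
by rewrite /phiPr (_ : x = - (1 / 2)); lra.
Qed.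

(* phi is onto the real line: P - c Q changes sign between the poles
   -1/2 and (sqrt 5 - 1)/2, where it equals P < 0 and P = 2 > 0. *)
Lemma phiR_onto (c : R) : exists x : R, phiQr x != 0 /\ phiPr x / phiQr x = c.
Proof.
pose p : {poly R} := 'X * (2%:P + 'X) * (1 + 'X - 'X ^+ 2)
  - c%:P * ((1 + 2%:P * 'X) * (1 - 'X - 'X ^+ 2)).
have hp x : p.[x] = phiPr x - c * phiQr x by rewrite /p !hornerE /phiPr /phiQr.
pose a : R := - (1 / 2); pose r : R := (Num.sqrt 5 - 1) / 2.
have s5 : Num.sqrt 5 ^+ 2 = 5 :> R by rewrite sqr_sqrtr // ler0n.
have s0 : 0 <= Num.sqrt 5 :> R := sqrtr_ge0 _.
have s1 : 1 < Num.sqrt 5 :> R by nra.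
have r_root : 1 - r - r ^+ 2 = 0.
  by rewrite /r; transitivity ((5 - Num.sqrt 5 ^+ 2) / 4 : R); [field | rewrite s5; field].
have Qa : phiQr a = 0 by rewrite /phiQr /a; field.
have Qr : phiQr r = 0 by rewrite /phiQr r_root mulr0.
have pa : p.[a] <= 0 by rewrite hp Qa mulr0 subr0 /phiPr /a; lra.
have pr : 0 <= p.[r] by rewrite hp Qr mulr0 subr0 phiPr_Qroot.
have ar : a <= r by rewrite /a /r; lra.
have [x _ /rootP] := poly_ivt ar (introT andP (conj pa pr)).
rewrite hp => /eqP; rewrite subr_eq0 => /eqP Px.
have Qx : phiQr x != 0.
  by apply/eqP => Q0; have := phiPr_pole Q0; rewrite Px Q0 mulr0 eqxx.
by exists x; rewrite Px mulfK.
Qed.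

Lemma phi_nonreal (z : C) : complex.Im z != 0 ->
  phi (Some z) = Some (phiC z) /\ complex.Im (phiC z) != 0.
Proof.
move=> z0.
have [w [hw side]] : exists w : C,
    w ^+ 2 + w + 1 = 0 /\ 0 < complex.Im w * complex.Im z.
  have [zlt0|zgt0|z_eq0] := ltgtP (complex.Im z) 0; last by rewrite z_eq0 eqxx in z0.
  - by exists (omega R ^+ 2); split; [exact: omega2_root | have := omega2_Im_lt0 R; nra].
  - by exists (omega R); split; [exact: omega_root | have := omega_Im_gt0 R; nra].
rewrite -root_sideP // in side.
have [Q0 side1 _] := phi_step hw side.
rewrite /= (negbTE Q0); split => //.
by move: side1; rewrite root_sideP //; apply: contraTneq => ->; rewrite mulr0 ltxx.
Qed.

Lemma phi_image_real : image (@ext_real_line R) (@phi R) = @ext_real_line R.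
Proof.
apply/seteqP; split.
  move=> _ [p p_real <-]; case: p p_real => [z /= Imz0|//].
  rewrite /phi; case: ifP => //= _.
  by rewrite (_ : z = Complex (complex.Re z) 0) ?phiC_real //; apply: complex_ext.
case=> [y /= Imy0|].
  have [x [Qx Px]] := phiR_onto (complex.Re y).
  exists (Some (Complex x 0)) => //; rewrite phi_real // Px.
  by congr Some; apply: complex_ext.
exists (Some (Complex (- (1 / 2)) 0)) => //=.
rewrite phiQ_real (_ : phiQr _ = 0) /=; first by rewrite eqxx.
by rewrite /phiQr; field.
Qed.

Lemma phi_preimage_real : preimage (@phi R) (@ext_real_line R) = @ext_real_line R.
Proof.
apply/seteqP; split => -[z|] // z_in.
  change (ext_real_line (phi (Some z))) in z_in.
  have [//|Imz] := eqVneq (complex.Im z) 0.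
  by have [phiz /eqP []] := phi_nonreal Imz; rewrite phiz in z_in.
change (ext_real_line (phi (Some z))).
by rewrite -phi_image_real; exists (Some z).
Qed.

End RealLine.

Theorem lemma3p7 (R : realType) :
  attracting_fixed (@phi R) (@phiC R) (@omega R) /\
  attracting_fixed (@phi R) (@phiC R) (@omega R ^+ 2) /\
  (forall z : Cplx R, 0 < complex.Im z ->
     sphere_cvg_fin (fun n => iter n (@phi R) (Some z)) (@omega R)) /\
  (forall z : Cplx R, complex.Im z < 0 ->
     sphere_cvg_fin (fun n => iter n (@phi R) (Some z)) (@omega R ^+ 2)) /\
  image (@ext_real_line R) (@phi R) = @ext_real_line R /\
  preimage (@phi R) (@ext_real_line R) = @ext_real_line R.
Proof.
have upper (z : Cplx R) : 0 < complex.Im z ->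
    sqmod (z - omega R) < sqmod (z + 1 + omega R).
  by move=> z0; rewrite root_sideP ?omega_root // mulr_gt0 ?omega_Im_gt0.
have lower (z : Cplx R) : complex.Im z < 0 ->
    sqmod (z - omega R ^+ 2) < sqmod (z + 1 + omega R ^+ 2).
  by move=> z0; rewrite root_sideP ?omega2_root // nmulr_rgt0 ?omega2_Im_lt0.
split; first exact/attracting_root/omega_root.
split; first exact/attracting_root/omega2_root.
split; first by move=> z /upper; apply: orbit_cvg; exact: omega_root.
split; first by move=> z /lower; apply: orbit_cvg; exact: omega2_root.
by split; [exact: phi_image_real | exact: phi_preimage_real].
Qed.
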